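(* Let $S$ be an intra-regular $\Gamma$-AG$^{**}$-groupoid and let $B$ be a $\Gamma$-bi-ideal (or a $\Gamma$-generalized bi-ideal) of $S$. Then $(B\Gamma S)\Gamma B=B\cap S=B$.
   Context: Let $S$ and $\Gamma$ be nonempty sets with a map $S\times\Gamma\times S\to S$, $(x,\gamma,y)\mapsto x\gamma y$. $S$ is a $\Gamma$-AG-groupoid if $(x\gamma y)\delta z=(z\gamma y)\delta x$ for all $x,y,z\in S$, $\gamma,\delta\in\Gamma$; it is a $\Gamma$-AG$^{**}$-groupoid if moreover $a\alpha(b\beta c)=b\alpha(a\beta c)$ for all $a,b,c\in S$, $\alpha,\beta\in\Gamma$. For subsets $A,B\subseteq S$, $A\Gamma B=\{a\gamma b: a\in A,\gamma\in\Gamma,b\in B\}$. $S$ is intra-regular if for every $a\in S$ there exist $x,y\in S$ and $\beta,\gamma,\delta\in\Gamma$ with $a=(x\beta(a\delta a))\gamma y$. A nonempty subset $B\subseteq S$ is a $\Gamma$-generalized bi-ideal if $(B\Gamma S)\Gamma B\subseteq B$, and a $\Gamma$-bi-ideal if in addition $B\Gamma B\subseteq B$. *)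

Set Implicit Arguments.

Definition GammaAG {S G : Type} (op : S -> G -> S -> S) : Prop :=
  forall (x y z : S) (g d : G), op (op x g y) d z = op (op z g y) d x.

Definition GammaAGss {S G : Type} (op : S -> G -> S -> S) : Prop :=
  GammaAG op /\
  forall (a b c : S) (al be : G), op a al (op b be c) = op b al (op a be c).

Definition intra_regular {S G : Type} (op : S -> G -> S -> S) : Prop :=
  forall a : S, exists (x y : S) (be ga de : G),
    a = op (op x be (op a de a)) ga y.

Definition setG {S G : Type} (op : S -> G -> S -> S) (A B : S -> Prop) : S -> Prop :=
  fun z => exists a g b, A a /\ B b /\ z = op a g b.

Definition fullset {S : Type} : S -> Prop := fun _ => True.

Definition set_inter {S : Type} (A B : S -> Prop) : S -> Prop := fun x => A x /\ B x.

Definition set_eq {S : Type} (A B : S -> Prop) : Prop := forall x, A x <-> B x.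

Definition set_sub {S : Type} (A B : S -> Prop) : Prop := forall x, A x -> B x.

Definition gen_bi_ideal {S G : Type} (op : S -> G -> S -> S) (B : S -> Prop) : Prop :=
  (exists b, B b) /\ set_sub (setG op (setG op B fullset) B) B.

Definition bi_ideal {S G : Type} (op : S -> G -> S -> S) (B : S -> Prop) : Prop :=
  gen_bi_ideal op B /\ set_sub (setG op B B) B.


(* Intra-regularity lets every element be written as [(b g1 s) g2 b]: rewrite
   [b = (x (b b)) y] with the two defining laws until [b] sits at both ends,
   substituting [b] back into itself once.  Such a [b] lies in [(B Γ S) Γ B]
   whenever it lies in [B], and a generalized bi-ideal gives the converse. *)

Section IntraRegularAGss.

Variables (S G : Type) (op : S -> G -> S -> S).

Hypothesis op_left_invertive :
  forall (x y z : S) (g d : G), op (op x g y) d z = op (op z g y) d x.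
Hypothesis op_left_comm :
  forall (a b c : S) (al be : G), op a al (op b be c) = op b al (op a be c).
Hypothesis op_intra_regular : intra_regular op.

Lemma intra_regular_sandwich (b : S) :
  exists (s : S) (g1 g2 : G), b = op (op b g1 s) g2 b.
Proof.
  destruct (op_intra_regular b) as (x & y & be & ga & de & hb).
  set (p := op x be (op b de b)) in hb.
  set (q := op x ga y).
  exists (op (op x be (op b de y)) de q), be, ga.
  assert (hb_ends : b = op (op y be (op x de b)) ga b).
  { rewrite <- op_left_invertive, <- op_left_comm. exact hb. }
  assert (hxb : op x de b = op p de q).
  { transitivity (op x de (op p ga y)); [now rewrite <- hb | apply op_left_comm]. }
  transitivity (op (op y be (op x de b)) ga b); [exact hb_ends | f_equal].
  rewrite hxb, (op_left_comm y p q); unfold p.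
  rewrite (op_left_invertive x (op b de b) (op y de q)).
  rewrite (op_left_comm (op y de q) b b), (op_left_invertive y q b).
  rewrite (op_left_comm b (op b de q) y).
  rewrite (op_left_invertive (op b de q) (op b de y) x).
  apply op_left_comm.
Qed.

Lemma sub_sandwich (B : S -> Prop) :
  set_sub B (setG op (setG op B fullset) B).
Proof.
  intros b hb.
  destruct (intra_regular_sandwich b) as (s & g1 & g2 & e).
  exists (op b g1 s), g2, b.
  repeat split; [| exact hb | exact e].
  exists b, g1, s. repeat split; exact hb.
Qed.

Lemma gen_bi_ideal_sandwich_eq (B : S -> Prop) :
  gen_bi_ideal op B -> set_eq (setG op (setG op B fullset) B) B.
Proof.
  intros [_ hsub] z; split; [apply hsub | apply sub_sandwich].
Qed.

End IntraRegularAGss.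

Theorem mainTheorem2 (S G : Type) (op : S -> G -> S -> S)
  (hS : inhabited S) (hG : inhabited G)
  (hAG : GammaAGss op) (hir : intra_regular op)
  (B : S -> Prop) (hB : bi_ideal op B \/ gen_bi_ideal op B) :
  set_eq (setG op (setG op B fullset) B) (set_inter B fullset) /\
  set_eq (set_inter B fullset) B.
Proof.
  destruct hAG as [hinv hcomm].
  assert (hgen : gen_bi_ideal op B) by (destruct hB as [[h _] | h]; exact h).
  pose proof (gen_bi_ideal_sandwich_eq S G op hinv hcomm hir B hgen) as hsand.
  split; intro z; specialize (hsand z); unfold set_inter, fullset; tauto.
Qed.
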